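(* Let $d\ge1$ and let $\mathfrak{T}:\mathcal{S}(\mathbb{R}^{2d})\to\mathcal{S}'(\mathbb{R}^{2d})$ be a non-zero continuous linear operator such that there is a function $\Phi:\mathbb{R}^{4d}\to\mathbb{R}^{4d}$ with $\mathfrak{T}\rho(\lambda)F=c\,\rho(\Phi(\lambda))\mathfrak{T}F$ for all $\lambda\in\mathbb{R}^{4d}$, $F\in\mathcal{S}(\mathbb{R}^{2d})$ (with constants $c\in\mathbb{C}$ possibly depending on $\lambda$). Let $$H=\{\nu\in\mathbb{R}^{4d}:\ \exists\, c_\nu\in\mathbb{C}\text{ with }\rho(\nu)\mathfrak{T}F=c_\nu\mathfrak{T}F\text{ for all }F\in\mathcal{S}(\mathbb{R}^{2d})\}$$ and let $q_H:\mathbb{R}^{4d}\to\mathbb{R}^{4d}/H$ be the quotient map. Then $q_H\circ\Phi:\mathbb{R}^{4d}\to\mathbb{R}^{4d}/H$ is one-to-one.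
   Context: For $x,\omega,t\in\mathbb{R}^{2d}$: $T_xF(t)=F(t-x)$, $M_\omega F(t)=e^{2\pi i\omega\cdot t}F(t)$, and for $(x,\omega)\in\mathbb{R}^{4d}$, $\rho(x,\omega)=T_{x/2}M_\omega T_{x/2}$, acting on $\mathcal{S}(\mathbb{R}^{2d})$ and by duality on $\mathcal{S}'(\mathbb{R}^{2d})$. $H$ is a subgroup of $\mathbb{R}^{4d}$. Continuity of $\mathfrak{T}$ is from the Schwartz topology to the weak* topology. *)

From HB Require Import structures.
From mathcomp Require Import all_boot all_order all_algebra.
From mathcomp Require Import all_classical all_reals.
From mathcomp Require Import topology normedtype derive trigo.
From mathcomp Require Import complex.

Set Implicit Arguments.
Unset Strict Implicit.
Unset Printing Implicit Defensive.

Import Order.TTheory GRing.Theory Num.Theory.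
Import numFieldNormedType.Exports.
Local Open Scope ring_scope.

Section Defs.
Variables (R : realType) (n : nat).

Notation pt := 'rV[R]_n.

Definition evec (j : 'I_n) : pt := \row_k (k == j)%:R.

Definition pderiv (j : 'I_n) (f : pt -> R) : pt -> R :=
  fun x => 'D_(evec j) f x.

(* iterated partial derivative d^beta, beta given as a list of directions *)
Definition dpart (s : seq 'I_n) (f : pt -> R) : pt -> R := foldr pderiv f s.

(* monomial t^alpha, alpha given as a list of coordinates (with repetition) *)
Definition mono (a : seq 'I_n) (t : pt) : R := \prod_(i <- a) t ord0 i.

Definition smooth (f : pt -> R) : Prop :=
  forall (s : seq 'I_n) (j : 'I_n) (x : pt), derivable (dpart s f) x (evec j).

Definition rschwartz (f : pt -> R) : Prop :=
  smooth f /\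
  forall (a s : seq 'I_n), exists M : R, forall t : pt,
    `| mono a t * dpart s f t | <= M.

Definition schwartz (F : pt -> R[i]) : Prop :=
  rschwartz (fun t => complex.Re (F t)) /\ rschwartz (fun t => complex.Im (F t)).

(* basic neighbourhoods of the Schwartz (Frechet) topology:
   G is in the (N, eps)-neighbourhood of F iff all seminorms
   sup_t |t^alpha d^beta (G - F)(t)| with |alpha|,|beta| <= N are <= eps
   (seminorms taken on real and imaginary parts). *)
Definition snbhs (N : nat) (eps : R) (F G : pt -> R[i]) : Prop :=
  forall (a s : seq 'I_n), (size a <= N)%N -> (size s <= N)%N ->
  forall t : pt,
    `| mono a t * dpart s (fun u => complex.Re (G u) - complex.Re (F u)) t | <= eps /\
    `| mono a t * dpart s (fun u => complex.Im (G u) - complex.Im (F u)) t | <= eps.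

Definition scontinuous (L : (pt -> R[i]) -> R[i]) : Prop :=
  forall F0, schwartz F0 ->
  forall eps : R, 0 < eps -> exists (N : nat) (delta : R), 0 < delta /\
    forall F, schwartz F -> snbhs N delta F0 F ->
      ComplexField.Normc.normc (L F - L F0) < eps.

Definition slinear (L : (pt -> R[i]) -> R[i]) : Prop :=
  forall (c : R[i]) F G, schwartz F -> schwartz G ->
    L (fun t => c * F t + G t) = c * L F + L G.

Definition tempered (u : (pt -> R[i]) -> R[i]) : Prop :=
  slinear u /\ scontinuous u.

Definition expi (th : R) : R[i] := (cos th +i* sin th)%C.

Definition dotv (x y : pt) : R := \sum_(i < n) x ord0 i * y ord0 i.

(* time-frequency shift rho(x, w) = T_{x/2} M_w T_{x/2} on functions:
   rho(x,w) F (t) = e^{2 pi i w.(t - x/2)} F(t - x) *)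
Definition rho (lam : pt * pt) (F : pt -> R[i]) : pt -> R[i] :=
  fun t => expi (2 * pi * dotv lam.2 (t - 2^-1 *: lam.1)) * F (t - lam.1).

(* rho on S'(R^n), extended by duality w.r.t. the bilinear pairing
   <u, g>:  <rho(x,w) u, g> = <u, rho(-x,w) g>
   (rho(-x,w) is the transpose of rho(x,w)). *)
Definition rhoD (lam : pt * pt) (u : (pt -> R[i]) -> R[i]) : (pt -> R[i]) -> R[i] :=
  fun g => u (rho (- lam.1, lam.2) g).

(* An operator T : S -> S' is encoded by its pairings T F g = <T F, g>. *)
Definition stoS' (T : (pt -> R[i]) -> (pt -> R[i]) -> R[i]) : Prop :=
  forall F, schwartz F -> tempered (T F).

Definition op_linear (T : (pt -> R[i]) -> (pt -> R[i]) -> R[i]) : Prop :=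
  forall (c : R[i]) F G, schwartz F -> schwartz G -> forall g, schwartz g ->
    T (fun t => c * F t + G t) g = c * T F g + T G g.

(* continuity from the Schwartz topology to the weak* topology of S' *)
Definition op_continuous (T : (pt -> R[i]) -> (pt -> R[i]) -> R[i]) : Prop :=
  forall g, schwartz g -> scontinuous (fun F => T F g).

Definition op_nonzero (T : (pt -> R[i]) -> (pt -> R[i]) -> R[i]) : Prop :=
  exists F g, [/\ schwartz F, schwartz g & T F g != 0].

Definition Hset (T : (pt -> R[i]) -> (pt -> R[i]) -> R[i]) (nu : pt * pt) : Prop :=
  exists c : R[i], forall F, schwartz F -> forall g, schwartz g ->
    rhoD nu (T F) g = c * T F g.

End Defs.

(** If [Phi lam - Phi mu] lies in H, composing the covariance relations for [lam] and
    [- mu] with the scalar action of [rho (Phi lam - Phi mu)] shows that [T rho(lam - mu)]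
    is a non-zero multiple of [T]. Intertwining [T rho(lam - mu) rho(tau)] in both orders
    then forces the commutation phase [e^{2 pi i sigma(lam - mu, tau)}] of the two
    time-frequency shifts to be 1 for every [tau]; as the symplectic form [sigma] is
    non-degenerate, [lam = mu]. The analytic input is that every [rho(lam)] preserves the
    Schwartz class: translations preserve rapid decay of all derivatives, and so does
    multiplication by [e^{i theta}] for affine [theta], whose derivatives are again of the
    same shape. *)

From HB Require Import structures.
From mathcomp Require Import all_boot all_order all_algebra.
From mathcomp Require Import all_classical all_reals.
From mathcomp Require Import topology normedtype derive realfun trigo.
From mathcomp Require Import complex.
From mathcomp Require Import ring lra.

Set Implicit Arguments.
Unset Strict Implicit.
Unset Printing Implicit Defensive.

Import Order.TTheory GRing.Theory Num.Theory.
Import numFieldNormedType.Exports.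
Local Open Scope ring_scope.

Section SchwartzClass.
Variables (R : realType) (n : nat).
Notation pt := 'rV[R]_n.
Implicit Types (f g : pt -> R) (x v : pt).

Lemma derive_along_line f x v : 'D_v f x = 'D_1 (fun h : R => f (h *: v + x)) 0.
Proof.
rewrite /derive; set g1 := fun h => h^-1 *: _; set g2 := fun h => h^-1 *: _.
suff -> : g1 = g2 by [].
by apply/funext => h; rewrite /g1 /g2 /= addr0 scale0r add0r [_%:A]mulr1.
Qed.

Lemma is_derive_comp_affine (g : R -> R) (dg : R) (th : pt -> R) (c : R) x v :
  (forall h, th (h *: v + x) = h * c + th x) -> is_derive (th x) 1 g dg ->
  is_derive x v (g \o th) (dg * c).
Proof.
move=> th_line gD.
pose aff (h : R) := h * c + th x.
have line : (fun h : R => (g \o th) (h *: v + x)) = g \o aff.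
  by apply/funext => h /=; rewrite th_line.
have affD : is_derive (0 : R) 1 aff c.
  by apply: is_derive_eq; rewrite scaler0 add0r addr0 [_%:A]mulr1.
have gD0 : is_derive (aff 0) 1 g dg by rewrite /aff mul0r add0r.
have lineD : is_derive (0 : R) 1 (g \o aff) (dg * c) := is_derive1_comp gD0 affD.
apply: DeriveDef; first by apply/derivable1P; rewrite line; apply: ex_derive.
by rewrite derive_along_line line derive_val.
Qed.

Lemma diff_quotient_translate f x0 x v :
  (fun h : R => h^-1 *: (((fun t => f (t - x0)) \o shift x) (h *: v) - f (x - x0)))
  = (fun h : R => h^-1 *: ((f \o shift (x - x0)) (h *: v) - f (x - x0))).
Proof. by apply/funext => h /=; rewrite addrA. Qed.

Lemma derive_translate f x0 x v :
  'D_v (fun t => f (t - x0)) x = 'D_v f (x - x0).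
Proof. by rewrite /derive diff_quotient_translate. Qed.

Lemma derivable_translate f x0 x v :
  derivable (fun t => f (t - x0)) x v = derivable f (x - x0) v.
Proof. by rewrite /derivable diff_quotient_translate. Qed.

Lemma is_derive_lincomb f g a b x v df dg :
  is_derive x v f df -> is_derive x v g dg ->
  is_derive x v (fun t => a * f t + b * g t) (a * df + b * dg).
Proof. by move=> fD gD; apply: is_deriveD (is_deriveZ a fD) (is_deriveZ b gD). Qed.

Lemma dpart_translate f x0 s :
  dpart s (fun t => f (t - x0)) = (fun t => dpart s f (t - x0)).
Proof.
elim: s => [//|j s IH] /=; rewrite IH; apply/funext => x.
by rewrite /pderiv derive_translate.
Qed.

Lemma dpart_lincomb f g a b s : smooth f -> smooth g ->
  dpart s (fun t => a * f t + b * g t) = (fun t => a * dpart s f t + b * dpart s g t).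
Proof.
move=> sf sg; elim: s => [//|j s IH] /=; rewrite IH; apply/funext => x.
have := is_derive_lincomb a b (derivableP (sf s j x)) (derivableP (sg s j x)).
by rewrite /pderiv => lD; rewrite derive_val.
Qed.

Definition rapid f := forall a, exists M : R, forall t, `|mono a t * f t| <= M.

Lemma rschwartzP f : rschwartz f <-> smooth f /\ forall s, rapid (dpart s f).
Proof.
split=> -[sf bf]; split=> //.
- by move=> s a; apply: bf.
- by move=> a s; apply: bf.
Qed.

Lemma rapid_lincomb f g a b : rapid f -> rapid g -> rapid (fun t => a * f t + b * g t).
Proof.
move=> bf bg al; have [M1 H1] := bf al; have [M2 H2] := bg al.
exists (`|a| * M1 + `|b| * M2) => t.
rewrite mulrDr (le_trans (ler_normD _ _)) // lerD //.
  by rewrite mulrCA normrM ler_wpM2l.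
by rewrite mulrCA normrM ler_wpM2l.
Qed.

Lemma rapid_translate f x0 : rapid f -> rapid (fun t => f (t - x0)).
Proof.
(* Induction on the monomial, writing [t_i = (t - x0)_i + x0_i]. *)
move=> + a; elim: a f => [|i a IH] f bf.
  by have [M HM] := bf [::]; exists M => t; have := HM (t - x0); rewrite /mono !big_nil.
have bif : rapid (fun u => u ord0 i * f u).
  move=> b; have [M HM] := bf (i :: b); exists M => u.
  by rewrite [X in `|X|](_ : _ = mono (i :: b) u * f u) // /mono big_cons; ring.
have [M1 H1] := IH _ bif; have [M2 H2] := IH _ bf.
exists (M1 + `|x0 ord0 i| * M2) => t.
have -> : mono (i :: a) t * f (t - x0) =
    mono a t * ((t - x0) ord0 i * f (t - x0)) + x0 ord0 i * (mono a t * f (t - x0)).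
  rewrite /mono big_cons !mxE; ring.
by rewrite (le_trans (ler_normD _ _)) // lerD // normrM ler_wpM2l.
Qed.

Lemma rschwartz_lincomb f g a b h : rschwartz f -> rschwartz g ->
  (forall t, h t = a * f t + b * g t) -> rschwartz h.
Proof.
move=> /rschwartzP[sf bf] /rschwartzP[sg bg] /funext ->; apply/rschwartzP; split.
  move=> s j x; rewrite dpart_lincomb //.
  have := is_derive_lincomb a b (derivableP (sf s j x)) (derivableP (sg s j x)).
  by move=> lD; apply: ex_derive.
by move=> s; rewrite dpart_lincomb //; apply: rapid_lincomb.
Qed.

Lemma rschwartz_pderiv f j : rschwartz f -> rschwartz (pderiv j f).
Proof.
have dpartS s : dpart s (pderiv j f) = dpart (s ++ [:: j]) f by rewrite /dpart foldr_cat.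
by move=> /rschwartzP[sf bf]; apply/rschwartzP; split=> [s|s]; rewrite dpartS.
Qed.

Lemma rschwartz_translate f x0 : rschwartz f -> rschwartz (fun t => f (t - x0)).
Proof.
move=> /rschwartzP[sf bf]; apply/rschwartzP; split=> [s j x|s].
  by rewrite dpart_translate derivable_translate.
by rewrite dpart_translate; apply: rapid_translate.
Qed.
End SchwartzClass.

Section Modulation.
Variables (R : realType) (n : nat) (th : 'rV[R]_n -> R) (w : 'I_n -> R).
Notation pt := 'rV[R]_n.
Implicit Types (A B : pt -> R) (x : pt).
Hypothesis th_affine : forall j h x, th (h *: evec R j + x) = h * w j + th x.

(* The real part of [e^{i th} (A + i B)]; the imaginary part is [rotate B (- A)]. *)
Definition rotate A B : pt -> R := fun t => cos (th t) * A t - sin (th t) * B t.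

Lemma is_derive_rotate A B j x dA dB :
  is_derive x (evec R j) A dA -> is_derive x (evec R j) B dB ->
  is_derive x (evec R j) (rotate A B)
    (cos (th x) * (dA - w j * B x) - sin (th x) * (dB + w j * A x)).
Proof.
move=> AD BD.
have cosD := is_derive_comp_affine (th_affine j ^~ x) (is_derive_cos (th x)).
have sinD := is_derive_comp_affine (th_affine j ^~ x) (is_derive_sin (th x)).
have rotD := is_deriveB (is_deriveM cosD AD) (is_deriveM sinD BD).
apply: is_derive_eq rotD _.
transitivity (cos (th x) * dA + A x * (- sin (th x) * w j) -
  (sin (th x) * dB + B x * (cos (th x) * w j))); first by [].
ring.
Qed.

Lemma dpart_rotate s A B : rschwartz A -> rschwartz B ->
  exists A' B', [/\ rschwartz A', rschwartz B' & dpart s (rotate A B) = rotate A' B'].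
Proof.
elim: s A B => [|j s IH] A B sA sB /=; first by exists A, B.
have [A' [B' [sA' sB' ->]]] := IH A B sA sB.
exists (fun t => pderiv j A' t - w j * B' t), (fun t => pderiv j B' t + w j * A' t).
split.
- by apply: (rschwartz_lincomb (a := 1) (b := - w j) (rschwartz_pderiv j sA') sB') => t; ring.
- by apply: (rschwartz_lincomb (a := 1) (b := w j) (rschwartz_pderiv j sB') sA') => t; ring.
apply/funext => x; case: sA' sB' => [dA _] [dB _].
have rotD := is_derive_rotate (derivableP (dA [::] j x)) (derivableP (dB [::] j x)).
by rewrite /pderiv derive_val.
Qed.

Lemma rapid_rotate A B : rapid A -> rapid B -> rapid (rotate A B).
Proof.
move=> bA bB a; have [M1 H1] := bA a; have [M2 H2] := bB a.
exists (M1 + M2) => t.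
have -> : mono a t * rotate A B t =
    cos (th t) * (mono a t * A t) - sin (th t) * (mono a t * B t).
  by rewrite /rotate; ring.
rewrite (le_trans (ler_normB _ _)) // lerD // normrM -[X in _ <= X]mul1r.
  by rewrite ler_pM ?cos_max.
by rewrite ler_pM ?sin_max.
Qed.

Lemma rschwartz_rotate A B : rschwartz A -> rschwartz B -> rschwartz (rotate A B).
Proof.
move=> sA sB; apply/rschwartzP; split=> [s j x|s];
  have [A' [B' [sA' sB' ->]]] := dpart_rotate s sA sB.
  case: sA' sB' => [dA _] [dB _].
  have rotD := is_derive_rotate (derivableP (dA [::] j x)) (derivableP (dB [::] j x)).
  by apply: ex_derive.
case/rschwartzP: sA' => _ /(_ [::]) bA; case/rschwartzP: sB' => _ /(_ [::]) bB.
exact: rapid_rotate.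
Qed.
End Modulation.

Section TimeFrequencyShifts.
Variables (R : realType) (n : nat).
Notation pt := 'rV[R]_n.
Implicit Types (u v w : pt) (a b : pt * pt) (F g : pt -> R[i]).

Lemma dotvC u v : dotv u v = dotv v u.
Proof. by apply: eq_bigr => i _; rewrite mulrC. Qed.

Lemma dotvDr w u v : dotv w (u + v) = dotv w u + dotv w v.
Proof. by rewrite /dotv -big_split; apply: eq_bigr => i _; rewrite mxE mulrDr. Qed.

Lemma dotvZr w v k : dotv w (k *: v) = k * dotv w v.
Proof. by rewrite /dotv mulr_sumr; apply: eq_bigr => i _; rewrite mxE mulrCA. Qed.

Lemma dotvDl w u v : dotv (u + v) w = dotv u w + dotv v w.
Proof. by rewrite dotvC dotvDr !(dotvC w). Qed.

Lemma dotvZl w v k : dotv (k *: v) w = k * dotv v w.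
Proof. by rewrite dotvC dotvZr dotvC. Qed.

Lemma dotvNr w v : dotv w (- v) = - dotv w v.
Proof. by rewrite -scaleN1r dotvZr mulN1r. Qed.

Lemma dotvBr w u v : dotv w (u - v) = dotv w u - dotv w v.
Proof. by rewrite dotvDr dotvNr. Qed.

Lemma dotv0r w : dotv w 0 = 0.
Proof. by rewrite -(scale0r 0) dotvZr mul0r. Qed.

Lemma dotv_evec w j : dotv w (evec R j) = w ord0 j.
Proof.
rewrite /dotv (bigD1 j) //= big1 ?addr0 => [|i /negbTE ij]; rewrite mxE ?ij ?mulr0 //.
by rewrite eqxx mulr1.
Qed.

Lemma Re_expiM th (z : R[i]) : complex.Re (expi th * z) = cos th * complex.Re z - sin th * complex.Im z.
Proof. by case: z. Qed.

Lemma Im_expiM th (z : R[i]) : complex.Im (expi th * z) = cos th * complex.Im z - sin th * - complex.Re z.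
Proof. by case: z => x y /=; ring. Qed.

Lemma schwartz_rho a F : schwartz F -> schwartz (rho a F).
Proof.
case=> sRe sIm.
pose th t := 2 * pi * dotv a.2 (t - 2^-1 *: a.1).
have th_affine j h x : th (h *: evec R j + x) = h * (2 * pi * a.2 ord0 j) + th x.
  by rewrite /th !dotvBr dotvDr dotvZr dotv_evec; ring.
have sRe' := rschwartz_translate a.1 sRe; have sIm' := rschwartz_translate a.1 sIm.
split.
  have -> : (fun t => complex.Re (rho a F t)) =
      rotate th (fun t => complex.Re (F (t - a.1))) (fun t => complex.Im (F (t - a.1))).
    by apply/funext => t; rewrite /rho Re_expiM.
  exact: (rschwartz_rotate th_affine sRe' sIm').
have -> : (fun t => complex.Im (rho a F t)) =
    rotate th (fun t => complex.Im (F (t - a.1))) (fun t => - complex.Re (F (t - a.1))).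
  by apply/funext => t; rewrite /rho Im_expiM.
apply: (rschwartz_rotate th_affine sIm').
by apply: (rschwartz_lincomb (a := -1) (b := 0) sRe' sRe') => t; ring.
Qed.

Lemma expiD (x y : R) : expi x * expi y = expi (x + y).
Proof. by rewrite /expi /= cosD sinD; congr (_ +i* _)%C; ring. Qed.

Lemma expi0 : expi 0 = 1 :> R[i].
Proof. by rewrite /expi cos0 sin0. Qed.

Lemma mul_expiN (x : R) : expi (- x) * expi x = 1.
Proof. by rewrite expiD addNr expi0. Qed.

Definition symp a b : R := dotv a.2 b.1 - dotv b.2 a.1.

Lemma sympC a b : symp b a = - symp a b.
Proof. by rewrite /symp opprB. Qed.

Lemma symp0r a : symp a 0 = 0.
Proof. by rewrite /symp dotv0r dotvC dotv0r subrr. Qed.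

Lemma rho_comp a b F : rho a (rho b F) = fun t => expi (pi * symp a b) * rho (a + b) F t.
Proof.
apply/funext => t; rewrite /rho /= mulrA expiD [RHS]mulrA expiD opprD addrA.
by congr (expi _ * _); rewrite /symp !dotvBr !dotvZr !dotvDl !dotvDr; field.
Qed.

Lemma rho0 F : rho 0 F = F.
Proof. by apply/funext => t; rewrite /rho /= dotvC dotv0r mulr0 expi0 mul1r subr0. Qed.

Lemma rhoK a F : rho a (rho (- a) F) = F.
Proof.
rewrite rho_comp subrr rho0; apply/funext => t.
rewrite /symp [(- a).1]/(- a.1) [(- a).2]/(- a.2) dotvNr (dotvC (- a.2)) dotvNr.
by rewrite (dotvC a.1) subrr mulr0 expi0 mul1r.
Qed.

Lemma rho_add a b F : rho (a + b) F = fun t => expi (- (pi * symp a b)) * rho a (rho b F) t.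
Proof. by rewrite rho_comp; apply/funext => t; rewrite mulrA mul_expiN mul1r. Qed.

Lemma symp_nondegenerate a : (forall b, expi (2 * pi * symp a b) = 1) -> a = 0.
Proof.
(* A [b] with [symp a b = 1/2] would give the phase [e^{i pi} = -1]. *)
move=> trivial_phase; have half b : symp a b != 2^-1.
  apply/eqP => ab; have /(congr1 (@complex.Re R)) := trivial_phase b.
  by rewrite ab mulrAC mulfV ?pnatr_eq0 // mul1r /= cospi; lra.
move: half {trivial_phase}; case: a => a1 a2 half.
congr pair; apply/rowP => i; rewrite mxE; apply/eqP/negPn/negP.
  move=> a1i; have := half (0, - (2 * a1 ord0 i)^-1 *: evec R i).
  rewrite /symp /= dotvZl (dotvC (evec R i)) dotv_evec (dotv0r a2).
  by move/eqP; apply; field.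
move=> a2i; have := half ((2 * a2 ord0 i)^-1 *: evec R i, 0).
rewrite /symp /= dotvZr dotv_evec (dotvC 0) (dotv0r a1) subr0.
by move/eqP; apply; field.
Qed.

(* [rhoD a] acts through [rho (flip a)], the transpose of [rho a]. *)
Definition flip a : pt * pt := (- a.1, a.2).

Lemma flipD a b : flip (a + b) = flip a + flip b.
Proof. by rewrite /flip /= opprD. Qed.

Lemma flipN a : flip (- a) = - flip a.
Proof. by []. Qed.

Lemma symp_flip a b : symp (flip a) (flip b) = symp b a.
Proof. by rewrite /symp /= !dotvNr; ring. Qed.

Lemma rhoDE a (u : (pt -> R[i]) -> R[i]) g : rhoD a u g = u (rho (flip a) g).
Proof. by []. Qed.

Lemma slinearZ (u : (pt -> R[i]) -> R[i]) : slinear u ->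
  forall c g, schwartz g -> u (fun t => c * g t) = c * u g.
Proof.
move=> u_lin c g sg; have := u_lin (c - 1) g g sg sg.
have -> : (fun t => (c - 1) * g t + g t) = (fun t => c * g t) by apply/funext => t; ring.
by move=> ->; ring.
Qed.

Lemma rhoD_comp a b (u : (pt -> R[i]) -> R[i]) g : slinear u -> schwartz g ->
  rhoD a (rhoD b u) g = expi (pi * symp a b) * rhoD (a + b) u g.
Proof.
move=> u_lin sg; rewrite !rhoDE rho_comp symp_flip -flipD (addrC b).
by rewrite (slinearZ u_lin _ (schwartz_rho (flip (a + b)) sg)).
Qed.
End TimeFrequencyShifts.

Section Intertwining.
Variables (R : realType) (n : nat) (T : ('rV[R]_n -> R[i]) -> ('rV[R]_n -> R[i]) -> R[i]).
Notation pt := 'rV[R]_n.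
Implicit Types (a b al be : pt * pt) (F g : pt -> R[i]).
Hypotheses (T_linear : op_linear T) (TF_linear : forall F, schwartz F -> slinear (T F)).
Hypothesis T_neq0 : op_nonzero T.

Definition intertwines a al (c : R[i]) :=
  forall F, schwartz F -> forall g, schwartz g -> T (rho a F) g = c * rhoD al (T F) g.

Let TZl c F g : schwartz F -> schwartz g -> T (fun t => c * F t) g = c * T F g.
Proof.
move=> sF sg; have Tg_linear : slinear (fun F => T F g) by move=> ? ? ? ? ?; apply: T_linear.
exact: (slinearZ Tg_linear c sF).
Qed.

Lemma intertwines_neq0 a al c : intertwines a al c -> c != 0.
Proof.
move=> Ia; apply/eqP => c0; case: T_neq0 => F [g [sF sg]].
by rewrite -(rhoK a F) Ia ?c0 ?mul0r ?eqxx //; apply: schwartz_rho.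
Qed.

Lemma intertwines_unique a al c c' : intertwines a al c -> intertwines a al c' -> c = c'.
Proof.
move=> Ic Ic'; case: T_neq0 => F [g [sF sg TFg]].
have sg' := schwartz_rho (- flip al) sg.
by have := Ic F sF _ sg'; rewrite Ic' // rhoDE rhoK => /(mulIf TFg).
Qed.

Lemma intertwines_add a b al be c c' : intertwines a al c -> intertwines b be c' ->
  intertwines (a + b) (al + be) (c * c' * expi (pi * (symp al be - symp a b))).
Proof.
move=> Ia Ib F sF g sg.
have sbF := schwartz_rho b sF; have sg' := schwartz_rho (flip al) sg.
rewrite rho_add TZl //; last exact: schwartz_rho.
rewrite Ia // rhoDE Ib // -[rhoD be _ _]/(rhoD al (rhoD be (T F)) g) rhoD_comp //; last exact: TF_linear.
by rewrite (mulrBr pi (symp al be)) -expiD; ring.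
Qed.

Lemma intertwines_opp a al c : intertwines a al c -> intertwines (- a) (- al) c^-1.
Proof.
move=> Ia F sF g sg.
have := Ia _ (schwartz_rho (- a) sF) _ (schwartz_rho (- flip al) sg).
rewrite rhoK rhoDE rhoK => TF_shift.
by rewrite rhoDE flipN TF_shift mulrA mulVf ?mul1r //; apply: intertwines_neq0 Ia.
Qed.

Lemma Hset_intertwines nu : Hset T nu -> exists c, intertwines 0 (- nu) c.
Proof.
case=> c nu_scalar; exists c => F sF g sg.
have sg' := schwartz_rho (- flip nu) sg.
by rewrite rho0 rhoDE flipN -nu_scalar // rhoDE rhoK.
Qed.

Lemma intertwines_commute s k tau be c : intertwines s 0 k -> intertwines tau be c ->
  expi (2 * pi * symp s tau) = 1.
Proof.
(* Both composites intertwine [rho (s + tau)] with [rho be], so their constants agree,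
   and these constants differ exactly by the commutation phase of [rho s] and [rho tau]. *)
move=> Is It; have kc0 := mulf_neq0 (intertwines_neq0 Is) (intertwines_neq0 It).
have I1 := intertwines_add Is It; have I2 := intertwines_add It Is.
rewrite add0r in I1; rewrite addr0 addrC (mulrC c) in I2.
move/(mulfI kc0): (intertwines_unique I1 I2).
rewrite (sympC be 0) (sympC s tau) symp0r oppr0 !sub0r opprK mulrN => E.
have -> : 2 * pi * symp s tau = pi * symp s tau + pi * symp s tau by ring.
by rewrite -expiD -{1}E mul_expiN.
Qed.
End Intertwining.

Unset Implicit Arguments.
Set Strict Implicit.

Theorem lemma4p4 (R : realType) (d : nat) (hd : (0 < d)%N)
  (T : ('rV[R]_(2 * d) -> R[i]) -> ('rV[R]_(2 * d) -> R[i]) -> R[i])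
  (Phi : 'rV[R]_(2 * d) * 'rV[R]_(2 * d) -> 'rV[R]_(2 * d) * 'rV[R]_(2 * d)) :
  stoS' T -> op_linear T -> op_continuous T -> op_nonzero T ->
  (forall lam, exists c : R[i], forall F, schwartz F -> forall g, schwartz g ->
     T (rho lam F) g = c * rhoD (Phi lam) (T F) g) ->
  forall lam mu, Hset T (Phi lam - Phi mu) -> lam = mu.
Proof.
move=> T_S' T_lin _ T_neq0 T_cov lam mu /Hset_intertwines[c Inu].
have TF_lin F (sF : schwartz F) : slinear (T F) := (T_S' F sF).1.
have [cl Il] := T_cov lam; have [cm Im] := T_cov mu.
have := intertwines_add T_lin TF_lin
  (intertwines_add T_lin TF_lin Il (intertwines_opp T_neq0 Im)) Inu.
rewrite addr0 subrr => Ilm.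
apply/subr0_eq/symp_nondegenerate => tau.
have [ct It] := T_cov tau.
exact: (intertwines_commute T_lin TF_lin T_neq0 Ilm It).
Qed.
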